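(* Assume $\theta_i<1$ for all $i$ and $\theta_j>0$ for some $j$. Suppose $\mathcal G(C)$ is a star topology with center node $l$ and $\theta_l=0$. Then the equilibrium social power $x^*$ of systems (A) and (B) is unique and satisfies: (i) $x^*\in\operatorname{int}\Delta_n$; (ii) $x^*_i=1/n$ for every $i\in\mathcal V_f\setminus\{l\}$; (iii) for every $i\in\mathcal V_p$, $x^*_i=\dfrac{n-\sqrt{n^2-4n\theta_i(1-\theta_i)}}{2n\theta_i}<\dfrac1n$, and this expression is strictly decreasing in $\theta_i\in(0,1)$; (iv) $x^*_l=\dfrac1n+\dfrac1n\sum_{j\in\mathcal V_p}\dfrac{\theta_j(1-x^*_j)}{1-\theta_jx^*_j}>\dfrac1n$.
   Context: Let $n\ge 2$, $\mathbf 1_n$ the all-ones vector, $I_n$ the identity matrix, $\Delta_n=\{x\in\mathbb R^n: x\ge 0,\ \mathbf 1_n^Tx=1\}$, $\operatorname{int}\Delta_n=\{x\in\mathbb R^n: x>0,\ \mathbf 1_n^Tx=1\}$. Let $C\in\mathbb R^{n\times n}$ be a nonnegative row-stochastic matrix with zero diagonal, and $\mathcal G(C)$ the digraph on $\{1,\dots,n\}$ with an edge $(i,j)$ iff $C_{ij}>0$. $\mathcal G(C)$ is a star topology with center node $l$ if every edge of $\mathcal G(C)$ is either from $l$ or to $l$ (i.e. $C_{ij}>0$ implies $i=l$ or $j=l$). Let $\theta=(\theta_1,\dots,\theta_n)\in[0,1]^n$, $\Theta=\mathrm{diag}(\theta)$, $W(x)=\mathrm{diag}(x)+(I_n-\mathrm{diag}(x))C$.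 Let $\mathcal V_f=\{i:\theta_i=0\}$ and $\mathcal V_p=\{i:\theta_i>0\}$. System (A): $x(s+1)=F(x(s))$, $x(0)\in\Delta_n$, where $F(x)=(I_n-\Theta)(I_n-W(x)^T\Theta)^{-1}\mathbf 1_n/n$; an equilibrium is $x^*\in\Delta_n$ with $F(x^* )=x^*$. System (B): $V(k+1)=\Theta W(x(k))V(k)+I_n-\Theta$, $x(k+1)=V(k+1)^T\mathbf 1_n/n$, with $V(0)=I_n$, $x(0)\in\Delta_n$; an equilibrium is a pair $(V^*,x^* )$ with $V^*$ row-stochastic, $x^*\in\Delta_n$, $V^*=\Theta W(x^* )V^*+I_n-\Theta$, $x^*=(V^* )^T\mathbf 1_n/n$. The equilibrium social powers of (A) and (B) coincide (the fixed points of $F$). *)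

(* R is an arbitrary real closed field (has square roots). *)
From HB Require Import structures.
From mathcomp Require Import all_boot all_order all_algebra.
Set Implicit Arguments. Unset Strict Implicit. Unset Printing Implicit Defensive.
Import Order.TTheory GRing.Theory Num.Theory.
Local Open Scope ring_scope.

Section Defs.
Variable R : rcfType.
Variable n : nat.

Definition stoch_zero_diag (C : 'M[R]_n) : Prop :=
  (forall i j, 0 <= C i j) /\ (forall i, \sum_j C i j = 1) /\ (forall i, C i i = 0).

Definition star_topology (C : 'M[R]_n) (l : 'I_n) : Prop :=
  forall i j, 0 < C i j -> i = l \/ j = l.

Definition simplex (x : 'cV[R]_n) : Prop :=
  (forall i, 0 <= x i 0) /\ \sum_i x i 0 = 1.
Definition int_simplex (x : 'cV[R]_n) : Prop :=
  (forall i, 0 < x i 0) /\ \sum_i x i 0 = 1.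

Definition Theta (theta : 'I_n -> R) : 'M[R]_n := diag_mx (\row_i theta i).

Definition Wmx (C : 'M[R]_n) (x : 'cV[R]_n) : 'M[R]_n :=
  diag_mx x^T + (1%:M - diag_mx x^T) *m C.

Definition ones_n : 'cV[R]_n := const_mx (n%:R^-1).

Definition Fden (theta : 'I_n -> R) (C : 'M[R]_n) (x : 'cV[R]_n) : 'M[R]_n :=
  1%:M - (Wmx C x)^T *m Theta theta.

Definition Fmap (theta : 'I_n -> R) (C : 'M[R]_n) (x : 'cV[R]_n) : 'cV[R]_n :=
  (1%:M - Theta theta) *m invmx (Fden theta C x) *m ones_n.

Definition equilibriumA (theta : 'I_n -> R) (C : 'M[R]_n) (x : 'cV[R]_n) : Prop :=
  simplex x /\ Fden theta C x \in unitmx /\ Fmap theta C x = x.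

Definition row_stochastic (V : 'M[R]_n) : Prop :=
  (forall i j, 0 <= V i j) /\ (forall i, \sum_j V i j = 1).

Definition equilibriumB (theta : 'I_n -> R) (C : 'M[R]_n)
    (V : 'M[R]_n) (x : 'cV[R]_n) : Prop :=
  row_stochastic V /\ simplex x /\
  V = Theta theta *m Wmx C x *m V + (1%:M - Theta theta) /\
  x = V^T *m ones_n.

End Defs.

Definition xp (R : rcfType) (n : nat) (t : R) : R :=
  (n%:R - Num.sqrt (n%:R ^+ 2 - 4 * n%:R * t * (1 - t))) / (2 * n%:R * t).

From HB Require Import structures.
From mathcomp Require Import all_boot all_order all_algebra.
From mathcomp Require Import ring lra.
Set Implicit Arguments. Unset Strict Implicit. Unset Printing Implicit Defensive.
Import Order.TTheory GRing.Theory Num.Theory.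
Local Open Scope ring_scope.

(* Every non-center agent i follows only the center (row i of C is e_l) and
   theta_l = 0, so every theta-weighted row of W(x) is that of a star matrix.
   Consequently I - W(x)^T Theta is an identity matrix perturbed in row l
   only, and both equilibrium notions reduce to the fixed points in the
   simplex of an explicit map Phi:
     Phi(y)_j = (1 - theta_j) / (n (1 - theta_j y_j))              (j <> l),
     Phi(y)_l = 1/n + 1/n sum_j theta_j (1 - y_j) / (1 - theta_j y_j).
   For j <> l the fixed-point equation is the scalar quadratic
   r - t r^2 = (1 - t)/n; its unique root in [0,1] is xp n t when t > 0 and
   1/n when t = 0, which determines the center coordinate as well. *)

(* The scalar equilibrium equation r - t r^2 = a (1 - t), with a = 1/N:
   its smaller root (N - S)/(2 N t), S = sqrt(N^2 - 4 N t (1 - t)), lies in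
   (0, 1/N) when N >= 2 and 0 < t < 1. *)
Lemma quadratic_small_root (R : rcfType) (N t S r a : R) :
  2 <= N -> 0 < t -> t < 1 -> 0 <= S ->
  S ^+ 2 = N ^+ 2 - 4 * N * t * (1 - t) -> r * (2 * N * t) = N - S ->
  a * N = 1 ->
  [/\ 0 < r, r < a & r - t * r ^+ 2 = a * (1 - t)].
Proof.
move=> N2 t0 t1 S0 SE rE aE.
have q : 0 < N * t * (1 - t) by apply: mulr_gt0; nra.
have SN : S < N.
  rewrite ltNge; apply/negP => H.
  have : N ^+ 2 <= S ^+ 2 by nra.
  lra.
have r0 : 0 < r by nra.
split => //.
  have H : N - 2 * t < S.
    rewrite ltNge; apply/negP => H.
    have : S ^+ 2 <= (N - 2 * t) ^+ 2 by nra.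
    nra.
  have : r * N < 1 by nra.
  nra.
have : (r - t * r ^+ 2 - a * (1 - t)) * (2 * N * t) ^+ 2 = 0.
  have -> : (r - t * r ^+ 2 - a * (1 - t)) * (2 * N * t) ^+ 2 =
     (r * (2 * N * t)) * (2 * N * t) - t * (r * (2 * N * t)) ^+ 2
     - (a * N) * ((1 - t) * 4 * N * t ^+ 2) by ring.
  rewrite rE aE.
  have -> : (N - S) * (2 * N * t) - t * (N - S) ^+ 2 - 1 * ((1 - t) * 4 * N * t ^+ 2)
     = t * (N ^+ 2 - S ^+ 2) - (1 - t) * 4 * N * t ^+ 2 by ring.
  rewrite SE; ring.
move/eqP; rewrite mulf_eq0 subr_eq0 => /orP [/eqP //|].
by rewrite expf_eq0 /= gt_eqF //; nra.
Qed.

Lemma xp_spec (R : rcfType) (n : nat) (t : R) : (2 <= n)%N -> 0 < t -> t < 1 ->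
  [/\ 0 < xp n t, xp n t < n%:R^-1
    & xp n t - t * xp n t ^+ 2 = n%:R^-1 * (1 - t)].
Proof.
move=> n2 t0 t1.
have N2 : (2 : R) <= n%:R by rewrite (ler_nat R 2 n).
have D0 : 0 <= n%:R ^+ 2 - 4 * n%:R * t * (1 - t) :> R by nra.
apply: (@quadratic_small_root R _ t _ (xp n t) (n%:R^-1) N2 t0 t1 (sqrtr_ge0 _)).
- by rewrite sqr_sqrtr.
- by rewrite /xp divfK // !mulf_neq0 // gt_eqF //; lra.
- by rewrite mulVf // gt_eqF //; lra.
Qed.

(* When a <= 1/2 the quadratic has at most one root in [0, 1]: the two roots
   y, r satisfy t (y + r) = 1, impossible for y <= 1 and 0 < r < a. *)
Lemma quadratic_root_unique (R : rcfType) (t y r a : R) :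
  0 < t -> t < 1 -> 0 <= y -> y <= 1 -> 0 < a -> a * 2 <= 1 -> 0 < r -> r < a ->
  r - t * r ^+ 2 = a * (1 - t) -> y - t * y ^+ 2 = a * (1 - t) -> y = r.
Proof.
move=> t0 t1 y0 y1 a0 a2 r0 ra rE yE.
have : (y - r) * (1 - t * (y + r)) = 0.
  have -> : (y - r) * (1 - t * (y + r)) = (y - t * y ^+ 2) - (r - t * r ^+ 2) by ring.
  by rewrite rE yE subrr.
move/eqP; rewrite mulf_eq0 => /orP [|/eqP H]; first by rewrite subr_eq0 => /eqP.
have : t * y <= t by nra.
have : t * r < r by nra.
nra.
Qed.

(* The root in (0, a) is strictly decreasing in t: from t (a - r^2) = a - r
   one gets a comparison of the ratios (a - r)/(a - r^2) for two roots. *)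
Lemma quadratic_root_decreasing (R : rcfType) (t1 t2 r1 r2 a : R) :
  0 < t1 -> t1 < t2 -> t2 < 1 -> 0 < a -> a * 2 <= 1 ->
  0 < r1 -> r1 < a -> 0 < r2 -> r2 < a ->
  r1 - t1 * r1 ^+ 2 = a * (1 - t1) -> r2 - t2 * r2 ^+ 2 = a * (1 - t2) -> r2 < r1.
Proof.
move=> t10 t12 t21 a0 a2 r10 r1a r20 r2a E1 E2.
rewrite ltNge; apply/negP => H.
have F1 : t1 * (a - r1 ^+ 2) = a - r1 by lra.
have F2 : t2 * (a - r2 ^+ 2) = a - r2 by lra.
have p1 : 0 < a - r1 ^+ 2 by nra.
have p2 : 0 < a - r2 ^+ 2 by nra.
have K : (a - r2) * (a - r1 ^+ 2) - (a - r1) * (a - r2 ^+ 2) =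
   (r1 - r2) * (a * (1 - r1 - r2) + r1 * r2) by ring.
have K2 : 0 <= a * (1 - r1 - r2) + r1 * r2 by nra.
have K3 : (a - r2) * (a - r1 ^+ 2) <= (a - r1) * (a - r2 ^+ 2) by nra.
rewrite -F1 -F2 in K3.
have pp : 0 < (a - r2 ^+ 2) * (a - r1 ^+ 2) by nra.
nra.
Qed.

Lemma xp_decreasing (R : rcfType) (n : nat) (t1 t2 : R) : (2 <= n)%N ->
  0 < t1 -> t1 < t2 -> t2 < 1 -> xp n t2 < xp n t1.
Proof.
move=> n2 h1 h12 h2.
have N2 : (2 : R) <= n%:R by rewrite (ler_nat R 2 n).
have a0 : 0 < n%:R^-1 :> R by rewrite invr_gt0; lra.
have a2 : n%:R^-1 * 2 <= 1 :> R.
  have : n%:R^-1 * n%:R = 1 :> R by rewrite mulVf // gt_eqF //; lra.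
  nra.
have [r10 r1a r1E] := xp_spec n2 h1 (lt_trans h12 h2).
have [r20 r2a r2E] := xp_spec n2 (lt_trans h1 h12) h2.
exact: (quadratic_root_decreasing h1 h12 h2 a0 a2 r10 r1a r20 r2a r1E r2E).
Qed.

Lemma sum_indicator (R : rcfType) (n : nat) (i : 'I_n) (F : 'I_n -> R) :
  \sum_j (j == i)%:R * F j = F i.
Proof.
rewrite (bigD1 i) //= eqxx mul1r big1 ?addr0 // => k /negbTE ->.
by rewrite mul0r.
Qed.

Section StarTopology.
Variables (R : rcfType) (n : nat) (C : 'M[R]_n) (theta : 'I_n -> R) (l : 'I_n).
Hypothesis n2 : (2 <= n)%N.
Hypothesis HC : stoch_zero_diag C.
Hypothesis Htheta : forall i, 0 <= theta i /\ theta i < 1.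
Hypothesis Hstar : star_topology C l.
Hypothesis Hl : theta l = 0.

Local Notation a := (n%:R^-1 : R).

Lemma n_neq0 : n%:R != 0 :> R.
Proof. by rewrite pnatr_eq0; case: n n2. Qed.

Lemma a_gt0 : 0 < a.
Proof. by rewrite invr_gt0 ltr0n; case: n n2. Qed.

Lemma a_le_half : a * 2 <= 1.
Proof.
have N2 : (2 : R) <= n%:R by rewrite (ler_nat R 2 n).
have an : a * n%:R = 1 by rewrite mulVf // n_neq0.
have := a_gt0; nra.
Qed.

Lemma C_leaf_row i j : i != l -> C i j = (j == l)%:R.
Proof.
move=> il; case: HC => C0 [Csum _].
have Z k : k != l -> C i k = 0.
  move=> kl; apply/eqP; rewrite eq_le C0 andbT leNgt.
  apply/negP => /Hstar [] /eqP; by rewrite ?(negbTE il) ?(negbTE kl).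
case: eqVneq => [->|jl]; last by rewrite Z.
by have := Csum i; rewrite (bigD1 l) //= big1 ?addr0 // => k; exact: Z.
Qed.

Lemma Wmx_entry y i j : Wmx C y i j = (i == j)%:R * y i 0 + (1 - y i 0) * C i j.
Proof.
rewrite /Wmx mulmxBl mul1mx mul_diag_mx !mxE.
by case: eqP => _ /=; ring.
Qed.

(* The theta-weighted rows of W(y) are those of the star influence matrix
   (row l is irrelevant since theta_l = 0). *)
Lemma theta_Wmx y j i : theta j * Wmx C y j i =
  theta j * ((j == i)%:R * y j 0 + (1 - y j 0) * (i == l)%:R).
Proof.
rewrite Wmx_entry; case: (eqVneq j l) => [->|jl]; first by rewrite Hl !mul0r.
by rewrite C_leaf_row.
Qed.

Lemma Fden_mulmx (y z : 'cV[R]_n) i : (Fden theta C y *m z) i 0 =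
  z i 0 - theta i * y i 0 * z i 0
  - (i == l)%:R * \sum_j theta j * (1 - y j 0) * z j 0.
Proof.
rewrite /Fden; move: (Wmx C y) (theta_Wmx y) => W KW.
rewrite mulmxBl mul1mx -mulmxA /Theta mul_diag_mx !mxE.
under eq_bigr => j _ do rewrite !mxE mulrA (mulrC _ (theta j)) KW.
have E j : theta j * ((j == i)%:R * y j 0 + (1 - y j 0) * (i == l)%:R) * z j 0
   = (j == i)%:R * (theta j * y j 0 * z j 0)
     + (i == l)%:R * (theta j * (1 - y j 0) * z j 0) by ring.
rewrite (eq_bigr _ (fun j _ => E j)) big_split /= -mulr_sumr sum_indicator; ring.
Qed.

Lemma mulmx_Fden (y : 'cV[R]_n) (v : 'rV[R]_n) j : (v *m Fden theta C y) 0 j =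
  v 0 j - theta j * y j 0 * v 0 j - theta j * (1 - y j 0) * v 0 l.
Proof.
rewrite /Fden; move: (Wmx C y) (theta_Wmx y) => W KW.
rewrite mulmxBr mulmx1 /Theta mul_mx_diag !mxE.
under eq_bigr => i _ do rewrite !mxE (mulrC _ (theta j)) KW.
have E i : v 0 i * (theta j * ((j == i)%:R * y j 0 + (1 - y j 0) * (i == l)%:R))
   = (i == j)%:R * (theta j * y j 0 * v 0 j)
     + (i == l)%:R * (theta j * (1 - y j 0) * v 0 l).
  case: (eqVneq i j) => [->|ij].
    by rewrite ?eqxx; case: (eqVneq j l) => [->|_] /=; ring.
  by rewrite ?(eq_sym j i) ?(negbTE ij); case: (eqVneq i l) => [->|_] /=; ring.
rewrite (eq_bigr _ (fun i _ => E i)) big_split /= !sum_indicator; ring.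
Qed.

Lemma Theta_Wmx_mulmx (y : 'cV[R]_n) (M : 'M[R]_n) i j :
  (Theta theta *m Wmx C y *m M) i j =
  theta i * y i 0 * M i j + theta i * (1 - y i 0) * M l j.
Proof.
move: (Wmx C y) (theta_Wmx y) => W KW.
rewrite /Theta mul_diag_mx !mxE.
under eq_bigr => k _ do rewrite !mxE KW.
have E k : theta i * ((i == k)%:R * y i 0 + (1 - y i 0) * (k == l)%:R) * M k j
   = (k == i)%:R * (theta i * y i 0 * M i j)
     + (k == l)%:R * (theta i * (1 - y i 0) * M l j).
  case: (eqVneq k i) => [->|ki].
    by rewrite ?eqxx; case: (eqVneq i l) => [->|_] /=; ring.
  by rewrite ?(eq_sym i k) ?(negbTE ki); case: (eqVneq k l) => [->|_] /=; ring.
by rewrite (eq_bigr _ (fun k _ => E k)) big_split /= !sum_indicator.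
Qed.

(* F is well defined at y as soon as no theta_j y_j equals 1: a left kernel
   vector v must vanish at l (theta_l = 0), then everywhere. *)
Lemma Fden_unit (y : 'cV[R]_n) :
  (forall j, theta j * y j 0 != 1) -> Fden theta C y \in unitmx.
Proof.
move=> Hy; rewrite unitmxE unitfE; apply/det0P => -[v vn0 vD].
move/eqP: vn0; apply; apply/matrixP => i j; rewrite (ord1 i) !mxE.
have Ej : (v *m Fden theta C y) 0 j = 0 by rewrite vD mxE.
have El : (v *m Fden theta C y) 0 l = 0 by rewrite vD mxE.
rewrite !mulmx_Fden Hl !mul0r !subr0 in Ej El.
rewrite El mulr0 subr0 -{1}(mul1r (v 0 j)) -mulrBl in Ej.
move/eqP: Ej; rewrite mulf_eq0 subr_eq0 eq_sym (negbTE (Hy j)) /=.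
by move/eqP.
Qed.

Lemma one_sub_Theta_entry i j :
  (1%:M - Theta theta) i j = (i == j)%:R * (1 - theta i).
Proof. by rewrite /Theta !mxE; case: eqP => _ /=; ring. Qed.

Lemma one_sub_Theta_mulmx (z : 'cV[R]_n) i :
  ((1%:M - Theta theta) *m z) i 0 = (1 - theta i) * z i 0.
Proof. by rewrite mulmxBl mul1mx /Theta mul_diag_mx !mxE; ring. Qed.

Lemma simplex_bounds (y : 'cV[R]_n) i : simplex y -> 0 <= y i 0 /\ y i 0 <= 1.
Proof.
move=> [y0 ys]; split => //; rewrite -ys (bigD1 i) //= lerDl.
by apply: sumr_ge0 => j _.
Qed.

Lemma den_gt0 (y : 'cV[R]_n) i : 0 <= y i 0 -> y i 0 <= 1 -> 0 < 1 - theta i * y i 0.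
Proof. by move=> h0 h1; have [t0 t1] := Htheta i; nra. Qed.

Lemma simplex_den_neq0 (y : 'cV[R]_n) i : simplex y -> 1 - theta i * y i 0 != 0.
Proof. by move=> ys; have [h0 h1] := simplex_bounds i ys; rewrite gt_eqF // den_gt0. Qed.

Definition share (y : 'cV[R]_n) j := theta j * (1 - y j 0) / (1 - theta j * y j 0).

Lemma share_center (y : 'cV[R]_n) : share y l = 0.
Proof. by rewrite /share Hl !mul0r. Qed.

Definition Phi (y : 'cV[R]_n) : 'cV[R]_n := \col_j
  (if j == l then a + a * \sum_i share y i
   else a * (1 - theta j) / (1 - theta j * y j 0)).

(* The matrix V of system (B) at equilibrium: the center keeps its own
   opinion, a leaf i mixes its prejudice with the center's opinion. *)
Definition Vstar (y : 'cV[R]_n) : 'M[R]_n := \matrix_(i, j)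
  (if i == l then (j == l)%:R else
     ((i == j)%:R * (1 - theta i) + (j == l)%:R * (theta i * (1 - y i 0)))
     / (1 - theta i * y i 0)).

Lemma Vstar_entry (y : 'cV[R]_n) i j : Vstar y i j = (if i == l then (j == l)%:R else
  ((i == j)%:R * (1 - theta i) + (j == l)%:R * (theta i * (1 - y i 0)))
  / (1 - theta i * y i 0)).
Proof. by rewrite mxE. Qed.

(* An equilibrium of (A) is a fixed point of Phi: solve
   (I - W^T Theta) z = 1/n explicitly, then y = (I - Theta) z. *)
Lemma equilibriumA_fixed (y : 'cV[R]_n) : equilibriumA theta C y -> y = Phi y.
Proof.
move=> [ys [U F]].
set z := invmx (Fden theta C y) *m ones_n R n.
have Dz : Fden theta C y *m z = ones_n R n by rewrite /z mulmxA mulmxV // mul1mx.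
have yz i : y i 0 = (1 - theta i) * z i 0.
  have : Fmap theta C y i 0 = y i 0 by rewrite F.
  by rewrite /Fmap -mulmxA one_sub_Theta_mulmx => <-.
set S := \sum_j theta j * (1 - y j 0) * z j 0.
have Dzi i : a = z i 0 - theta i * y i 0 * z i 0 - (i == l)%:R * S.
  have := congr1 (fun M : 'cV[R]_n => M i 0) Dz.
  by rewrite /= Fden_mulmx [ones_n R n _ _]mxE => <-.
have z_leaf i : i != l -> z i 0 = a / (1 - theta i * y i 0).
  move=> il; have := Dzi i; rewrite (negbTE il) mul0r subr0 => ->.
  by field; rewrite simplex_den_neq0 ?n_neq0.
apply/matrixP => j k; rewrite (ord1 k) mxE.
case: (eqVneq j l) => [->|jl]; last first.
  by rewrite {1}yz z_leaf //; field; rewrite simplex_den_neq0 ?n_neq0.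
have z_center : z l 0 = a + S by have := Dzi l; rewrite eqxx Hl /= => ->; ring.
rewrite yz Hl subr0 mul1r z_center; congr (_ + _).
rewrite /S mulr_sumr; apply: eq_bigr => i _.
case: (eqVneq i l) => [->|il]; first by rewrite share_center Hl !mul0r mulr0.
by rewrite z_leaf // /share; ring.
Qed.

(* Conversely a simplex fixed point of Phi is an equilibrium of (A): the
   vector z below solves (I - W^T Theta) z = 1/n. *)
Lemma fixed_equilibriumA (y : 'cV[R]_n) : simplex y -> y = Phi y ->
  equilibriumA theta C y.
Proof.
move=> ys E; have dp i := simplex_den_neq0 i ys.
have Ei i : y i 0 = Phi y i 0 by rewrite -E.
have U : Fden theta C y \in unitmx.
  apply: Fden_unit => j; have [h0 h1] := simplex_bounds j ys.
  by have := den_gt0 h0 h1; rewrite subr_gt0 => /lt_eqF ->.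
do 2!split => //.
set z : 'cV[R]_n := \col_i (if i == l then y l 0 else a / (1 - theta i * y i 0)).
have HS : \sum_j theta j * (1 - y j 0) * z j 0 = a * \sum_j share y j.
  rewrite mulr_sumr; apply: eq_bigr => j _; rewrite /z mxE.
  case: (eqVneq j l) => [->|jl]; first by rewrite share_center Hl !mul0r mulr0.
  by rewrite /share; field; rewrite dp ?n_neq0.
have Dz : Fden theta C y *m z = ones_n R n.
  apply/matrixP => i k; rewrite (ord1 k) Fden_mulmx HS [ones_n R n _ _]mxE /z mxE.
  case: (eqVneq i l) => [->|il]; first by rewrite [in LHS]Ei mxE eqxx Hl /=; ring.
  by rewrite /=; field; rewrite dp ?n_neq0.
rewrite /Fmap -Dz -mulmxA mulKmx //.
apply/matrixP => i k; rewrite (ord1 k) one_sub_Theta_mulmx /z mxE.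
case: (eqVneq i l) => [->|il]; first by rewrite Hl; ring.
by rewrite [RHS]Ei mxE (negbTE il); field; rewrite dp ?n_neq0.
Qed.

Lemma Vstar_power (y : 'cV[R]_n) : (Vstar y)^T *m ones_n R n = Phi y.
Proof.
apply/matrixP => j k; rewrite (ord1 k) !mxE.
under eq_bigr => i _ do rewrite !mxE.
case: (eqVneq j l) => [->|jl].
  have E i : (if i == l then true%:R else
     ((i == l)%:R * (1 - theta i) + true%:R * (theta i * (1 - y i 0)))
     / (1 - theta i * y i 0)) * a = (i == l)%:R * a + a * share y i.
    case: (eqVneq i l) => [->|il] /=; first by rewrite share_center; ring.
    by rewrite /share; ring.
  by rewrite (eq_bigr _ (fun i _ => E i)) big_split /= sum_indicator -mulr_sumr.
have E i : (if i == l then false%:R else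
     ((i == j)%:R * (1 - theta i) + false%:R * (theta i * (1 - y i 0)))
     / (1 - theta i * y i 0)) * a
     = (i == j)%:R * (a * (1 - theta j) / (1 - theta j * y j 0)).
  case: (eqVneq i l) => [->|il] /=; first by rewrite eq_sym (negbTE jl) /=; ring.
  by case: (eqVneq i j) => [->|ij] /=; ring.
by rewrite (eq_bigr _ (fun i _ => E i)) sum_indicator.
Qed.

Lemma Vstar_equation (y : 'cV[R]_n) : simplex y ->
  Vstar y = Theta theta *m Wmx C y *m Vstar y + (1%:M - Theta theta).
Proof.
move=> ys; apply/matrixP => i j.
rewrite [((_ + _ : 'M_n) i j)]mxE Theta_Wmx_mulmx one_sub_Theta_entry !Vstar_entry eqxx.
case: (eqVneq i l) => [->|il] /=; first by rewrite Hl eq_sym; ring.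
by field; rewrite simplex_den_neq0.
Qed.

Lemma Vstar_stochastic (y : 'cV[R]_n) : simplex y -> row_stochastic (Vstar y).
Proof.
move=> ys; split.
  move=> i j; rewrite Vstar_entry; case: eqVneq => _ /=; first exact: ler0n.
  have [t0 t1] := Htheta i; have [y0 y1] := simplex_bounds i ys.
  apply: divr_ge0; last exact/ltW/den_gt0.
  by apply: addr_ge0; apply: mulr_ge0; rewrite ?ler0n //; nra.
move=> i; have [->|il] := eqVneq i l.
  under eq_bigr do rewrite Vstar_entry eqxx /= -[_%:R]mulr1.
  exact: (sum_indicator l (fun _ => 1)).
under eq_bigr do rewrite Vstar_entry (negbTE il).
have E j : ((i == j)%:R * (1 - theta i) + (j == l)%:R * (theta i * (1 - y i 0)))
    / (1 - theta i * y i 0)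
  = (j == i)%:R * ((1 - theta i) / (1 - theta i * y i 0))
    + (j == l)%:R * (theta i * (1 - y i 0) / (1 - theta i * y i 0)).
  by rewrite (eq_sym i j); ring.
rewrite (eq_bigr _ (fun j _ => E j)) big_split /= !sum_indicator.
by field; rewrite simplex_den_neq0.
Qed.

(* The equilibrium equation of (B) determines V: row l is e_l, and row i
   solves a scalar linear equation involving row l. *)
Lemma equilibriumB_V V (y : 'cV[R]_n) : equilibriumB theta C V y -> V = Vstar y.
Proof.
move=> [_ [ys [VE _]]].
have VEij i j : V i j = theta i * y i 0 * V i j + theta i * (1 - y i 0) * V l j
   + (i == j)%:R * (1 - theta i).
  by rewrite {1}VE [((_ + _ : 'M_n) i j)]mxE Theta_Wmx_mulmx one_sub_Theta_entry.
have Vl j : V l j = (j == l)%:R by rewrite VEij Hl eq_sym; ring.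
apply/matrixP => i j; rewrite Vstar_entry.
case: (eqVneq i l) => [->|il] /=; first exact: Vl.
have K : V i j * (1 - theta i * y i 0) =
   (i == j)%:R * (1 - theta i) + (j == l)%:R * (theta i * (1 - y i 0)).
  by rewrite -Vl mulrBr mulr1 {1}VEij; ring.
by rewrite -K mulfK // simplex_den_neq0.
Qed.

Lemma equilibriumB_fixed V (y : 'cV[R]_n) : equilibriumB theta C V y -> y = Phi y.
Proof.
move=> h; have [_ [_ [_ xE]]] := h.
by rewrite {1}xE (equilibriumB_V h) Vstar_power.
Qed.

Lemma fixed_equilibriumB (y : 'cV[R]_n) : simplex y -> y = Phi y ->
  equilibriumB theta C (Vstar y) y.
Proof.
move=> ys E; split; first exact: Vstar_stochastic.
by do 2!split => //; [exact: Vstar_equation | rewrite Vstar_power].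
Qed.

Definition xleaf i := if 0 < theta i then xp n (theta i) else a.

Definition xstar : 'cV[R]_n := \col_i (if i == l then
  a + a * \sum_j theta j * (1 - xleaf j) / (1 - theta j * xleaf j) else xleaf i).

Lemma theta_eq0 i : ~~ (0 < theta i) -> theta i = 0.
Proof. by have [t0 _] := Htheta i; rewrite -leNgt => ti; apply/eqP; rewrite eq_le ti. Qed.

Lemma xleaf_spec i : [/\ 0 < xleaf i, xleaf i <= a
  & xleaf i - theta i * xleaf i ^+ 2 = a * (1 - theta i)].
Proof.
rewrite /xleaf; case: ifPn => tp; last by rewrite theta_eq0 // a_gt0; split => //; ring.
by have [_ t1] := Htheta i; have [? /ltW ? ?] := xp_spec n2 tp t1.
Qed.

Lemma xleaf_den_gt0 i : 0 < 1 - theta i * xleaf i.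
Proof.
have [h1 h2 _] := xleaf_spec i; have := a_le_half; have := a_gt0.
by have [t0 t1] := Htheta i; nra.
Qed.

Lemma xleaf_fixed i : xleaf i = a * (1 - theta i) / (1 - theta i * xleaf i).
Proof.
have [_ _ E] := xleaf_spec i.
by rewrite -E; field; rewrite gt_eqF // xleaf_den_gt0.
Qed.

Lemma share_xleaf_ge0 j : 0 <= theta j * (1 - xleaf j) / (1 - theta j * xleaf j).
Proof.
have [h1 h2 _] := xleaf_spec j; have := a_le_half; have [t0 _] := Htheta j.
move=> *; apply: divr_ge0; last exact/ltW/xleaf_den_gt0.
by apply: mulr_ge0 => //; lra.
Qed.

Lemma share_xleaf_gt0 j : 0 < theta j -> 0 < theta j * (1 - xleaf j) / (1 - theta j * xleaf j).
Proof.
have [h1 h2 _] := xleaf_spec j; have := a_le_half.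
move=> *; apply: divr_gt0; last exact: xleaf_den_gt0.
by apply: mulr_gt0 => //; lra.
Qed.

Lemma xstar_leaf i : i != l -> xstar i 0 = xleaf i.
Proof. by move=> il; rewrite mxE (negbTE il). Qed.

Lemma sum_share_xstar :
  \sum_j share xstar j = \sum_j theta j * (1 - xleaf j) / (1 - theta j * xleaf j).
Proof.
apply: eq_bigr => j _; case: (eqVneq j l) => [->|jl].
  by rewrite share_center Hl !mul0r.
by rewrite /share xstar_leaf.
Qed.

Lemma xstar_center : xstar l 0 = a + a * \sum_j share xstar j.
Proof. by rewrite sum_share_xstar mxE eqxx. Qed.

Lemma xstar_pos i : 0 < xstar i 0.
Proof.
case: (eqVneq i l) => [->|il]; last by rewrite xstar_leaf //; case: (xleaf_spec i).
rewrite mxE eqxx; apply: ltr_wpDr; last exact: a_gt0.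
by apply: mulr_ge0; [exact: ltW a_gt0 | apply: sumr_ge0 => j _; exact: share_xleaf_ge0].
Qed.

(* Each coordinate equals (i == l)(x_l - a) + a - a share_i, and the shares
   add up to (x_l - a)/a, so the coordinates sum to n a = 1. *)
Lemma xstar_sum : \sum_i xstar i 0 = 1.
Proof.
have E i : xstar i 0 = (i == l)%:R * (xstar l 0 - a) + a - a * share xstar i.
  case: (eqVneq i l) => [->|il] /=; first by rewrite share_center; ring.
  rewrite /share xstar_leaf //; have [_ _ Eb] := xleaf_spec i.
  apply/eqP; rewrite -subr_eq0.
  have -> : xleaf i - (false%:R * (xstar l 0 - a) + a
      - a * (theta i * (1 - xleaf i) / (1 - theta i * xleaf i)))
    = ((xleaf i - theta i * xleaf i ^+ 2) - a * (1 - theta i))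
      / (1 - theta i * xleaf i).
    by rewrite /=; field; rewrite gt_eqF ?xleaf_den_gt0 ?n_neq0.
  by rewrite Eb subrr mul0r.
rewrite (eq_bigr _ (fun i _ => E i)) !big_split /= sum_indicator sumrN.
rewrite sumr_const card_ord.
have -> : a *+ n = 1 by rewrite -[a *+ n]mulr_natr mulVf ?n_neq0.
by rewrite -mulr_sumr xstar_center; ring.
Qed.

Lemma xstar_simplex : simplex xstar.
Proof. by split; [move=> i; exact/ltW/xstar_pos | exact: xstar_sum]. Qed.

Lemma xstar_fixed : xstar = Phi xstar.
Proof.
apply/matrixP => j k; rewrite (ord1 k) [RHS]mxE.
case: (eqVneq j l) => [->|jl]; first exact: xstar_center.
by rewrite xstar_leaf // {1}xleaf_fixed.
Qed.

(* Uniqueness: a leaf coordinate of a simplex fixed point solves its scalar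
   quadratic, hence equals xleaf; the center coordinate then follows. *)
Lemma fixed_unique (y : 'cV[R]_n) : simplex y -> y = Phi y -> y = xstar.
Proof.
move=> ys E; have Ey j : y j 0 = Phi y j 0 by rewrite -E.
have y_leaf j : j != l -> y j 0 = xleaf j.
  move=> jl; have [h0 h1] := simplex_bounds j ys.
  have Y : y j 0 - theta j * y j 0 ^+ 2 = a * (1 - theta j).
    have -> : y j 0 - theta j * y j 0 ^+ 2 = y j 0 * (1 - theta j * y j 0) by ring.
    by rewrite {1}Ey mxE (negbTE jl) divfK ?simplex_den_neq0.
  have [_ t1] := Htheta j.
  rewrite /xleaf; case: ifPn => tp.
    have [r0 ra rE] := xp_spec n2 tp t1.
    exact: (quadratic_root_unique tp t1 h0 h1 a_gt0 a_le_half r0 ra rE Y).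
  by move: Y; rewrite theta_eq0 // !mul0r !subr0 mulr1.
apply/matrixP => j k; rewrite (ord1 k).
case: (eqVneq j l) => [->|jl]; last by rewrite y_leaf // xstar_leaf.
rewrite Ey mxE eqxx xstar_center; congr (_ + _ * _); apply: eq_bigr => i _.
case: (eqVneq i l) => [->|il]; first by rewrite !share_center.
by rewrite /share y_leaf // xstar_leaf.
Qed.

Lemma center_not_prejudiced i : 0 < theta i -> i != l.
Proof. by move=> ti; apply/eqP => E; rewrite E Hl ltxx in ti. Qed.

Lemma xstar_center_formula : xstar l 0 = a + a *
  \sum_(j | 0 < theta j) theta j * (1 - xstar j 0) / (1 - theta j * xstar j 0).
Proof.
rewrite mxE eqxx [in RHS]big_mkcond /=; congr (_ + _ * _); apply: eq_bigr => j _.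
case: ifPn => tp; first by rewrite xstar_leaf ?center_not_prejudiced.
by rewrite theta_eq0 // !mul0r.
Qed.

(* (iv), inequality: some prejudiced agent gives a positive share. *)
Lemma xstar_center_gt : (exists j, 0 < theta j) -> a < xstar l 0.
Proof.
move=> [j0 tj0]; rewrite xstar_center sum_share_xstar -[X in X < _]addr0 ltrD2l.
apply: mulr_gt0; first exact: a_gt0.
rewrite (bigD1 j0) //=; apply: ltr_pwDl; first exact: share_xleaf_gt0.
by apply: sumr_ge0 => j _; exact: share_xleaf_ge0.
Qed.

End StarTopology.

Theorem theorem2 (R : rcfType) (n : nat) (C : 'M[R]_n) (theta : 'I_n -> R)
    (l : 'I_n) :
  (2 <= n)%N ->
  stoch_zero_diag C ->
  (forall i, 0 <= theta i /\ theta i < 1) ->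
  (exists j, 0 < theta j) ->
  star_topology C l ->
  theta l = 0 ->
  exists xs : 'cV[R]_n,
    (* xs is the unique equilibrium social power of system (A) *)
    (equilibriumA theta C xs /\ (forall y, equilibriumA theta C y -> y = xs)) /\
    (* xs is the unique equilibrium social power of system (B) *)
    ((exists V, equilibriumB theta C V xs) /\
     (forall V y, equilibriumB theta C V y -> y = xs)) /\
    (* (i) *)
    int_simplex xs /\
    (* (ii) *)
    (forall i, theta i = 0 -> i != l -> xs i 0 = n%:R^-1) /\
    (* (iii) *)
    (forall i, 0 < theta i ->
       xs i 0 = xp n (theta i) /\ xp n (theta i) < n%:R^-1) /\
    (forall t1 t2 : R, 0 < t1 -> t1 < t2 -> t2 < 1 -> xp n t2 < xp n t1) /\
    (* (iv) *)
    xs l 0 = n%:R^-1 + n%:R^-1 *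
       (\sum_(j | 0 < theta j) theta j * (1 - xs j 0) / (1 - theta j * xs j 0)) /\
    n%:R^-1 < xs l 0.
Proof.
move=> n2 HC Htheta hj Hstar Hl.
have simplex_xs : simplex (xstar theta l) by apply: xstar_simplex.
have fixed_xs : xstar theta l = Phi theta l (xstar theta l) by apply: xstar_fixed.
have unique_xs y : simplex y -> y = Phi theta l y -> y = xstar theta l.
  by move=> ys; apply: fixed_unique.
exists (xstar theta l); split; [split|split; [split|]].
- by apply: (fixed_equilibriumA (l := l)).
- move=> y h; apply: unique_xs; first by case: h.
  by apply: (equilibriumA_fixed (C := C) (l := l)) h.
- by exists (Vstar theta l (xstar theta l)); apply: fixed_equilibriumB.
- move=> V y h; apply: unique_xs; first by case: h => _ [].
  by apply: (equilibriumB_fixed (l := l)) h.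
split; first by split; [apply: xstar_pos | apply: xstar_sum].
split; first by move=> i ti il; rewrite xstar_leaf // /xleaf ti ltxx.
split.
  move=> i ti; rewrite xstar_leaf ?(center_not_prejudiced Hl) // /xleaf ti.
  by have [_ t1] := Htheta i; case: (xp_spec n2 ti t1).
split; first by move=> t1 t2; apply: xp_decreasing.
by split; [apply: xstar_center_formula | apply: xstar_center_gt].
Qed.
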